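(* Let $\overline{A}^f,\overline{A}^d\in\mathbb{R}^{nd\times nd}$ with $\overline{A}^{f,\top}=\overline{A}^f\succ0$ and $\overline{A}^{d,\top}=\overline{A}^d$, and $b\in\mathbb{R}^{nd}$. Assume $(\overline{A}^f+\overline{A}^d)u+b=0$ has a unique solution $u_*$. Consider the iteration $$u_{\ell+1}=u_\ell-\delta\eta\,(\overline{A}^f u_\ell+\overline{A}^d u_{\ell-1}+b),\qquad \ell\ge1,$$ with $u_0=u_1=0$. If $\lambda_{\min}(\overline{A}^f)>\max\{\lambda_{\max}(\overline{A}^d),|\lambda_{\min}(\overline{A}^d)|\}$, then there is a sufficiently small $\delta\eta>0$ such that $u_\ell\to u_*$ as $\ell\to\infty$.
   Context: $\lambda_{\min}$ and $\lambda_{\max}$ denote the smallest and largest eigenvalues of a symmetric matrix. *)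

From HB Require Import structures.
From mathcomp Require Import all_boot all_order all_algebra.
From mathcomp Require Import all_classical all_reals all_analysis.
Set Implicit Arguments. Unset Strict Implicit. Unset Printing Implicit Defensive.
Import Order.TTheory GRing.Theory Num.Theory.
Import numFieldNormedType.Exports.
Local Open Scope classical_set_scope.
Local Open Scope ring_scope.

Definition symmx (R : realType) (N : nat) (A : 'M[R]_N) : Prop := A^T = A.

Definition posdef (R : realType) (N : nat) (A : 'M[R]_N) : Prop :=
  A^T = A /\ forall x : 'cV[R]_N, x != 0 -> 0 < (x^T *m A *m x) 0 0.

Definition lambda_min (R : realType) (N : nat) (A : 'M[R]_N) : R :=
  inf [set a : R | eigenvalue A a].
Definition lambda_max (R : realType) (N : nat) (A : 'M[R]_N) : R :=
  sup [set a : R | eigenvalue A a].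

(* two-step iteration: iter_pair k = (u_k, u_{k+1}), with u_0 = u_1 = 0 and
   u_{l+1} = u_l - h (Af u_l + Ad u_{l-1} + b) for l >= 1, h = delta*eta *)
Fixpoint iter_pair (R : realType) (N : nat) (Af Ad : 'M[R]_N) (b : 'cV[R]_N)
  (h : R) (k : nat) : 'cV[R]_N * 'cV[R]_N :=
  match k with
  | 0%N => (0, 0)
  | k'.+1 =>
      let p := iter_pair Af Ad b h k' in
      (p.2, p.2 - h *: (Af *m p.2 + Ad *m p.1 + b))
  end.

Definition iter_u (R : realType) (N : nat) (Af Ad : 'M[R]_N) (b : 'cV[R]_N)
  (h : R) (k : nat) : 'cV[R]_N := (iter_pair Af Ad b h k).1.

From HB Require Import structures.
From mathcomp Require Import all_boot all_order all_algebra.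
From mathcomp Require Import all_classical all_reals all_analysis.
From mathcomp Require Import ring lra.
Import Order.TTheory GRing.Theory Num.Theory.
Import numFieldNormedType.Exports.
Local Open Scope classical_set_scope.
Local Open Scope ring_scope.
Set Implicit Arguments. Unset Strict Implicit. Unset Printing Implicit Defensive.

(* Write A = Af + Ad, e_k = u_(k+1) - u_* and d_k = u_(k+1) - u_k.  As
   A u_* + b = 0, one step of the iteration reads
     e_(k+1) = e_k - h g_k,   d_(k+1) = - h g_k,   g_k = A e_k - Ad d_k.
   By Rayleigh's principle x^T A x >= mu |x|^2 with
   mu = lambda_min(Af) + lambda_min(Ad) > 0, and A, Ad are bounded operators,
   so for small h the Lyapunov function |e_k|^2 + |d_k|^2 shrinks by the
   factor 1 - h mu / 2 at every step and u_k -> u_* geometrically. *)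

Section Dot.
Variables (R : realType) (N : nat).
Implicit Types (x y z : 'cV[R]_N) (M : 'M[R]_N).

Definition dot x y : R := (x^T *m y) 0 0.

Lemma dotE x y : dot x y = \sum_i x i 0 * y i 0.
Proof. by rewrite /dot mxE; apply: eq_bigr => i _; rewrite mxE. Qed.

Lemma dotC x y : dot x y = dot y x.
Proof. by rewrite !dotE; apply: eq_bigr => i _; rewrite mulrC. Qed.

Lemma dotDl x y z : dot (x + y) z = dot x z + dot y z.
Proof. by rewrite !dotE -big_split; apply: eq_bigr => i _; rewrite mxE mulrDl. Qed.

Lemma dotDr x y z : dot z (x + y) = dot z x + dot z y.
Proof. by rewrite dotC dotDl !(dotC z). Qed.

Lemma dotZl a x y : dot (a *: x) y = a * dot x y.
Proof. by rewrite !dotE mulr_sumr; apply: eq_bigr => i _; rewrite mxE mulrA. Qed.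

Lemma dotZr a x y : dot y (a *: x) = a * dot y x.
Proof. by rewrite dotC dotZl dotC. Qed.

Lemma dotNl x y : dot (- x) y = - dot x y.
Proof. by rewrite -scaleN1r dotZl mulN1r. Qed.

Lemma dotNr x y : dot y (- x) = - dot y x.
Proof. by rewrite dotC dotNl dotC. Qed.

Lemma dotBl x y z : dot (x - y) z = dot x z - dot y z.
Proof. by rewrite dotDl dotNl. Qed.

Lemma dotBr x y z : dot z (x - y) = dot z x - dot z y.
Proof. by rewrite dotDr dotNr. Qed.

Lemma dot0l x : dot 0 x = 0.
Proof. by rewrite dotE big1 // => i _; rewrite mxE mul0r. Qed.

Lemma dot_mulmx M x y : dot x (M *m y) = dot (M^T *m x) y.
Proof. by rewrite /dot trmx_mul trmxK mulmxA. Qed.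

Lemma sqr_coord_le_dot x i : x i 0 ^+ 2 <= dot x x.
Proof.
rewrite dotE (bigD1 i) //= -expr2 lerDl sumr_ge0 // => j _.
by rewrite -expr2 sqr_ge0.
Qed.

Lemma dot_ge0 x : 0 <= dot x x.
Proof. by rewrite dotE sumr_ge0 // => i _; rewrite -expr2 sqr_ge0. Qed.

Lemma dot_eq0 x : (dot x x == 0) = (x == 0).
Proof.
apply/idP/eqP => [|->]; last by rewrite dot0l.
rewrite dotE psumr_eq0 => [/allP x0|i _]; last by rewrite -expr2 sqr_ge0.
apply/matrixP => i j; have := x0 i (mem_index_enum _).
by rewrite (ord1 j) mxE /= mulf_eq0 orbb => /eqP.
Qed.

Lemma dot_gt0 x : x != 0 -> 0 < dot x x.
Proof. by rewrite lt_def dot_eq0 dot_ge0 andbT. Qed.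

Lemma dot_young x y t : 0 < t -> 2 * dot x y <= t * dot x x + dot y y / t.
Proof.
move=> t_gt0; have := dot_ge0 (t *: x - y).
rewrite !dotBl !dotBr !dotZl !dotZr (dotC y x) => sq_ge0.
rewrite -(ler_pM2l t_gt0).
have -> : t * (t * dot x x + dot y y / t) = t ^+ 2 * dot x x + dot y y.
  by field; rewrite gt_eqF.
lra.
Qed.

Lemma dot_subr_le x y : dot (x - y) (x - y) <= 2 * dot x x + 2 * dot y y.
Proof.
have := dot_ge0 (x + y).
rewrite !dotDl !dotDr !dotNl !dotNr (dotC y x); lra.
Qed.

Lemma mx_norm_le_sqrt_dot x : `|x| <= Num.sqrt (dot x x).
Proof.
rewrite [leLHS]/Num.norm /= mx_normrE; apply: bigmax_le => [|[i j] _ /=].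
  exact: sqrtr_ge0.
by rewrite (ord1 j) -sqrtr_sqr ler_sqrt ?dot_ge0 ?sqr_coord_le_dot.
Qed.

End Dot.

Section QuadraticForm.
Variable R : realType.

(* Row vectors, because Heine-Borel ([bounded_closed_compact]) is stated for
   ['rV]. *)
Lemma quadform_continuous N (S : 'M[R]_N) :
  continuous (fun v : 'rV[R]_N => dot v^T (S *m v^T)).
Proof.
have -> : (fun v : 'rV[R]_N => dot v^T (S *m v^T)) =
    (fun v => \sum_i \sum_j (v 0 i * (S i j * v 0 j))).
  apply: funext => v; rewrite dotE; apply: eq_bigr => i _.
  by rewrite !mxE mulr_sumr; apply: eq_bigr => j _; rewrite !mxE.
apply: continuous_big => [|i _]; first exact: add_continuous.
apply: continuous_big => [|j _]; first exact: add_continuous.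
move=> v; apply: (continuousM (s := fun v : 'rV[R]_N => v 0 i)).
  exact: coord_continuous.
apply: (continuousM (s := fun=> S i j)); first exact: cst_continuous.
exact: coord_continuous.
Qed.

Lemma unit_sphere_compact N : compact [set v : 'rV[R]_N | dot v^T v^T = 1].
Proof.
apply: bounded_closed_compact.
  exists 1; split => // r r_gt1 v /= v1; apply: le_trans (ltW r_gt1).
  rewrite [leLHS]/Num.norm /= mx_normrE; apply: bigmax_le => // [[i j]] _ /=.
  have := sqr_coord_le_dot v^T j; rewrite mxE v1 (ord1 i).
  by rewrite -real_normK ?num_real // expr_le1.
have -> : [set v : 'rV[R]_N | dot v^T v^T = 1] =
    (fun v : 'rV[R]_N => dot v^T (1%:M *m v^T)) @^-1` [set 1].
  by apply/seteqP; split => v /=; rewrite mul1mx.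
apply: preimage_closed => [v _|]; last exact: closed_eq.
exact: quadform_continuous.
Qed.

Lemma quadform_min_sphere n (S : 'M[R]_n.+1) :
  exists2 c : 'cV[R]_n.+1, dot c c = 1 &
    forall x, dot c (S *m c) * dot x x <= dot x (S *m x).
Proof.
pose sphere := [set v : 'rV[R]_n.+1 | dot v^T v^T = 1].
have sphere0 : sphere !=set0.
  exists (delta_mx 0 0); rewrite /sphere /= dotE (bigD1 0) //= !mxE eqxx mulr1.
  by rewrite big1 ?addr0 // => i /negbTE i0; rewrite !mxE i0 andbF mul0r.
have [c /[!inE] c1 cmin] := compact_EVT_min sphere0 (@unit_sphere_compact n.+1)
  (continuous_subspaceT (quadform_continuous (S := S))).
exists c^T => [|x]; first exact: c1.
have [->|x0] := eqVneq x 0; first by rewrite mulmx0 !dot0l mulr0.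
pose s := Num.sqrt (dot x x).
have s_gt0 : 0 < s by rewrite sqrtr_gt0 dot_gt0.
have s2 : dot x x = s ^+ 2 by rewrite sqr_sqrtr ?dot_ge0.
have y1 : dot (s^-1 *: x) (s^-1 *: x) = 1.
  by rewrite dotZl dotZr s2; field; rewrite gt_eqF.
have := cmin (s^-1 *: x)^T; rewrite inE /sphere /= trmxK => /(_ y1).
rewrite -scalemxAr dotZl dotZr mulrA -invfM -expr2 -s2 => le_cx.
by rewrite -ler_pdivlMr ?dot_gt0 // mulrC.
Qed.

Lemma quadratic_ge0_linear_coef0 (a c : R) :
  (forall t, 0 <= 2 * t * a + t ^+ 2 * c) -> a = 0.
Proof.
move=> ge0; pose k := `|c| + 1.
have k_gt0 : 0 < k by rewrite /k ltr_pwDr // normr_ge0.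
have ck : c <= k - 1 by rewrite /k addrK ler_norm.
have := ge0 (- a / k).
have -> : 2 * (- a / k) * a + (- a / k) ^+ 2 * c = a ^+ 2 * (c - 2 * k) / k ^+ 2.
  by field; rewrite gt_eqF.
rewrite pmulr_lge0 ?invr_gt0 ?exprn_gt0 // => h.
apply/eqP; rewrite -sqrf_eq0 eq_le sqr_ge0 andbT; nra.
Qed.

(* x^T B x >= 0 at x = c + t (B c) reads 2 t |B c|^2 + t^2 (B c)^T B (B c) >= 0. *)
Lemma psd_quadform_eq0 N (B : 'M[R]_N) c : B^T = B ->
  (forall x, 0 <= dot x (B *m x)) -> dot c (B *m c) = 0 -> B *m c = 0.
Proof.
move=> sB psd qc; apply/eqP; rewrite -dot_eq0; apply/eqP.
set w := B *m c; apply: (@quadratic_ge0_linear_coef0 _ (dot w (B *m w))) => t.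
have := psd (c + t *: w).
rewrite mulmxDr -scalemxAr !dotDl !dotDr !dotZl !dotZr qc dot_mulmx sB -/w.
rewrite (dotC c); nra.
Qed.

Lemma rayleigh_eigenvalue n (S : 'M[R]_n.+1) : S^T = S ->
  exists2 m, eigenvalue S m & forall x, m * dot x x <= dot x (S *m x).
Proof.
move=> sS; have [c c1 cmin] := quadform_min_sphere S.
set m := dot c (S *m c); exists m => //.
have sB : (S - m%:M)^T = S - m%:M by rewrite linearB /= tr_scalar_mx sS.
have qB x : dot x ((S - m%:M) *m x) = dot x (S *m x) - m * dot x x.
  by rewrite mulmxBl mul_scalar_mx dotBr dotZr.
have psdB x : 0 <= dot x ((S - m%:M) *m x) by rewrite qB subr_ge0 cmin.
have qBc : dot c ((S - m%:M) *m c) = 0 by rewrite qB c1 mulr1 subrr.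
have /eqP := psd_quadform_eq0 sB psdB qBc.
rewrite mulmxBl mul_scalar_mx subr_eq0 => /eqP Sc.
apply/eigenvalueP; exists c^T; first by rewrite -{1}sS -trmx_mul Sc linearZ.
apply: contraTneq isT => c0; move: c1; rewrite -[c]trmxK c0 trmx0 dot0l => /eqP.
by rewrite eq_sym oner_eq0.
Qed.

Lemma lambda_min_quadform_le N (S : 'M[R]_N) x : S^T = S ->
  lambda_min S * dot x x <= dot x (S *m x).
Proof.
case: N S x => [|n] S x sS; first by rewrite !dotE !big_ord0 mulr0.
have [m Sm mmin] := rayleigh_eigenvalue sS.
apply: le_trans (mmin x); rewrite ler_wpM2r ?dot_ge0 //.
have m_lb : lbound [set a | eigenvalue S a] m.
  move=> a /eigenvalueP [u uS u0].
  have Su : S *m u^T = a *: u^T by rewrite -{1}sS -trmx_mul uS linearZ.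
  have := mmin u^T; rewrite Su dotZr ler_pM2r // dot_gt0 //.
  by apply: contra_neq u0 => /(congr1 trmx); rewrite trmxK trmx0.
exact: ge_inf (ex_intro _ m m_lb) _ Sm.
Qed.

Lemma mulmx_dot_le N (M : 'M[R]_N) :
  exists2 K, 0 <= K & forall x, dot (M *m x) (M *m x) <= K * dot x x.
Proof.
case: N M => [|n] M; first by exists 0 => // x; rewrite !dotE !big_ord0 mul0r.
have [c _ cmin] := quadform_min_sphere (- (M^T *m M)).
pose q := dot c (- (M^T *m M) *m c); exists `|q| => // x.
have := cmin x; rewrite -/q mulNmx dotNr -mulmxA (dot_mulmx M^T) trmxK => le_qx.
apply: le_trans (_ : - q * dot x x <= _); first by rewrite mulNr lerNr.
by rewrite ler_wpM2r ?dot_ge0 // -normrN ler_norm.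
Qed.

End QuadraticForm.

Lemma cvg_dot_geometric (R : realType) N (u : nat -> 'cV[R]_N) l (C q : R) :
  0 <= q < 1 -> (forall k, dot (u k - l) (u k - l) <= C * q ^+ k) ->
  u @ \oo --> l.
Proof.
move=> /andP[q_ge0 q_lt1] le_u; apply: cvg_zero; apply/norm_cvg0P.
apply: (@squeeze_cvgr _ _ _ _ (cst 0) (fun k => Num.sqrt (C * q ^+ k))).
- apply: nearW => k /=; rewrite normr_ge0 /=.
  exact: le_trans (mx_norm_le_sqrt_dot _) (ler_wsqrtr (le_u k)).
- exact: cvg_cst.
- rewrite -sqrtr0; apply: continuous_cvg; first exact: sqrt_continuous.
  rewrite -(mulr0 C); apply: cvgM; first exact: cvg_cst.
  by apply: cvg_expr; rewrite ger0_norm.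
Qed.

Section TwoStepIteration.
Variables (R : realType) (N : nat) (Af Ad : 'M[R]_N) (b ustar : 'cV[R]_N).
Variables (mu K h : R).
Hypotheses (mu_gt0 : 0 < mu) (h_gt0 : 0 < h).
Hypotheses (hK_le : 8 * h * K <= mu) (hmu_le : 4 * h * mu <= 1).
Hypothesis coercive : forall x, mu * dot x x <= dot x ((Af + Ad) *m x).
Hypothesis sum_bounded :
  forall x, dot ((Af + Ad) *m x) ((Af + Ad) *m x) <= K * dot x x.
Hypothesis Ad_bounded : forall x, dot (Ad *m x) (Ad *m x) <= K * dot x x.
Hypothesis ustar_sol : (Af + Ad) *m ustar + b = 0.

Lemma lyapunov_contraction e dd (g := (Af + Ad) *m e - Ad *m dd) :
  dot (e - h *: g) (e - h *: g) + dot (h *: g) (h *: g)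
    <= (1 - h * mu / 2) * (dot e e + dot dd dd).
Proof.
have -> : dot (e - h *: g) (e - h *: g) + dot (h *: g) (h *: g)
    = dot e e - 2 * h * dot e g + 2 * h ^+ 2 * dot g g.
  by clearbody g; rewrite !dotBl !dotBr !dotZl !dotZr (dotC g e); ring.
have eg : mu * dot e e - dot e (Ad *m dd) <= dot e g by rewrite dotBr lerB.
have young : 2 * dot e (Ad *m dd) <= mu * dot e e + K * dot dd dd / mu.
  apply: le_trans (dot_young _ _ mu_gt0) _.
  by rewrite lerD2l ler_pM2r ?invr_gt0.
have gg : dot g g <= 2 * K * (dot e e + dot dd dd).
  apply: le_trans (dot_subr_le _ _) _.
  have := sum_bounded e; have := Ad_bounded dd; lra.
have hKe : 0 <= (mu - 8 * h * K) * h * dot e e.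
  by rewrite !mulr_ge0 ?subr_ge0 ?dot_ge0 ?(ltW h_gt0).
have hKd : 0 <= (mu - 8 * h * K) * h * dot dd dd.
  by rewrite !mulr_ge0 ?subr_ge0 ?dot_ge0 ?(ltW h_gt0).
have hmud : 0 <= (1 - 4 * h * mu) * dot dd dd.
  by rewrite mulr_ge0 ?subr_ge0 ?dot_ge0.
have hKmu : h * (K * dot dd dd / mu) <= dot dd dd / 8.
  have : 0 <= (mu - 8 * h * K) * dot dd dd.
    by rewrite mulr_ge0 ?subr_ge0 ?dot_ge0.
  rewrite mulrA ler_pdivrMr //; lra.
have := ler_wpM2l (ltW h_gt0) eg; have := ler_wpM2l (ltW h_gt0) young.
have := ler_wpM2l (sqr_ge0 h) gg.
have := dot_ge0 dd; lra.
Qed.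

Lemma residual_decomp x y :
  Af *m y + Ad *m x + b = (Af + Ad) *m (y - ustar) - Ad *m (y - x).
Proof.
have -> : b = - ((Af + Ad) *m ustar) by rewrite (addr0_eq ustar_sol).
by rewrite !mulmxBr !mulmxDl [RHS]addrAC addrKA opprK.
Qed.

Let rate_ge0 : 0 <= 1 - h * mu / 2.
Proof. by move: hmu_le; lra. Qed.

Let rate_lt1 : 1 - h * mu / 2 < 1.
Proof. by rewrite gtrDl oppr_lt0 divr_gt0 ?mulr_gt0. Qed.

Definition lyapunov k :=
  let p := iter_pair Af Ad b h k in
  dot (p.2 - ustar) (p.2 - ustar) + dot (p.2 - p.1) (p.2 - p.1).

Lemma lyapunov_step k : lyapunov k.+1 <= (1 - h * mu / 2) * lyapunov k.
Proof.
rewrite /lyapunov /=; set y := _.2; set x := _.1.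
rewrite residual_decomp [y - _ - ustar]addrAC [y - _ - y]addrAC subrr add0r.
by rewrite dotNl dotNr opprK lyapunov_contraction.
Qed.

Lemma lyapunov_geometric k : lyapunov k <= (1 - h * mu / 2) ^+ k * lyapunov 0.
Proof.
elim: k => [|k IHk]; first by rewrite expr0 mul1r.
apply: le_trans (lyapunov_step k) (le_trans (ler_wpM2l rate_ge0 IHk) _).
by rewrite exprS mulrA.
Qed.

Lemma iter_u_dist k :
  dot (iter_u Af Ad b h k - ustar) (iter_u Af Ad b h k - ustar)
    <= 2 * lyapunov k.
Proof.
rewrite /lyapunov /iter_u; set p := iter_pair _ _ _ _ k.
have -> : p.1 - ustar = (p.2 - ustar) - (p.2 - p.1).
  by rewrite opprB [RHS]addrC subrKA.
apply: le_trans (dot_subr_le _ _) _; lra.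
Qed.

Lemma iter_u_cvg : iter_u Af Ad b h @ \oo --> ustar.
Proof.
apply: (@cvg_dot_geometric _ _ _ _ (2 * lyapunov 0) (1 - h * mu / 2)) => [|k].
  by rewrite rate_ge0 rate_lt1.
apply: le_trans (iter_u_dist k) _; rewrite -mulrA ler_wpM2l // mulrC.
exact: lyapunov_geometric.
Qed.

End TwoStepIteration.

Unset Implicit Arguments.

Theorem theorem5 (R : realType) (n d : nat)
  (Af Ad : 'M[R]_(n * d)) (b : 'cV[R]_(n * d)) (ustar : 'cV[R]_(n * d)) :
  posdef Af ->
  symmx Ad ->
  (Af + Ad) *m ustar + b = 0 ->
  (forall v : 'cV[R]_(n * d), (Af + Ad) *m v + b = 0 -> v = ustar) ->
  lambda_min Af > Num.max (lambda_max Ad) `|lambda_min Ad| ->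
  exists h0 : R, 0 < h0 /\
    forall h : R, 0 < h -> h <= h0 ->
      iter_u Af Ad b h @ \oo --> ustar.
Proof.
move=> [sAf _] sAd ustar_sol _; rewrite gt_max => /andP[_ Af_dom].
pose mu := lambda_min Af + lambda_min Ad.
have mu_gt0 : 0 < mu.
  have : - lambda_min Ad <= `|lambda_min Ad| by rewrite -normrN ler_norm.
  by move: Af_dom; rewrite /mu; lra.
have coercive x : mu * dot x x <= dot x ((Af + Ad) *m x).
  by rewrite mulmxDl dotDr mulrDl lerD // lambda_min_quadform_le.
have [K1 K1_ge0 bound1] := mulmx_dot_le (Af + Ad).
have [K2 K2_ge0 bound2] := mulmx_dot_le Ad.
pose K := K1 + K2; pose D := 8 * K + 4 * mu ^+ 2 + 1.
have D_gt0 : 0 < D by move: K1_ge0 K2_ge0; rewrite /D /K; nra.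
exists (mu / D); split => [|h h_gt0]; first by rewrite divr_gt0.
rewrite ler_pdivlMr // /D => hD.
have hK_ge0 : 0 <= h * K := mulr_ge0 (ltW h_gt0) (addr_ge0 K1_ge0 K2_ge0).
have hmu2_ge0 : 0 <= h * mu ^+ 2 := mulr_ge0 (ltW h_gt0) (sqr_ge0 mu).
apply: (@iter_u_cvg _ _ _ _ _ _ mu K) => // [||x|x].
- lra.
- by rewrite -(ler_pM2r mu_gt0) mul1r; lra.
- by rewrite (le_trans (bound1 x)) // ler_wpM2r ?dot_ge0 // lerDl.
- by rewrite (le_trans (bound2 x)) // ler_wpM2r ?dot_ge0 // lerDr.
Qed.
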